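(* Let $r$ be a Lyndon word with $|r|\ge2$ and standard factorization $r=r's'$, and let $u$ be a nonempty word such that $u\le s'$ and $ru$ is a Lyndon word. Then the lexicographically smallest proper nonempty suffix of $ru$ is a suffix of $u$ (i.e., has length at most $|u|$).
   Context: Words are finite sequences over a totally ordered alphabet, compared in lexicographic order (a proper prefix is smaller than the word). A Lyndon word is a nonempty word strictly smaller than each of its proper nonempty suffixes. For a Lyndon word $r$ with $|r|\ge2$, its standard factorization is $r=r's'$ where $s'$ is the longest proper suffix of $r$ that is a Lyndon word; equivalently, $s'$ is the lexicographically smallest proper nonempty suffix of $r$. *)

From mathcomp Require Import all_boot all_order.
Set Implicit Arguments. Unset Strict Implicit. Unset Printing Implicit Defensive.
Import Order.TTheory.
Local Open Scope order_scope.

Fixpoint lexlt {d} {T : orderType d} (u v : seq T) : bool :=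
  match u, v with
  | [::], [::] => false
  | [::], _ :: _ => true
  | _ :: _, [::] => false
  | a :: u', b :: v' => (a < b) || ((a == b) && lexlt u' v')
  end.

Definition lexle {d} {T : orderType d} (u v : seq T) : bool :=
  (u == v) || lexlt u v.

Definition lyndon {d} {T : orderType d} (w : seq T) : bool :=
  (0 < size w)%N &&
  [forall k : 'I_(size w), (0 < k)%N ==> lexlt w (drop k w)].

(* s is the longest proper (nonempty) suffix of r that is a Lyndon word,
   i.e. the right factor of the standard factorization r = r' s'. *)
Definition std_right_factor {d} {T : orderType d} (r s : seq T) : Prop :=
  exists k : nat, [/\ (0 < k < size r)%N, s = drop k r, lyndon s &
    forall j : nat, (0 < j < size r)%N -> lyndon (drop j r) -> (k <= j)%N].

Definition min_proper_suffix {d} {T : orderType d} (w s : seq T) : Prop :=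
  exists k : nat, [/\ (0 < k < size w)%N, s = drop k w &
    forall j : nat, (0 < j < size w)%N -> lexle s (drop j w)].

From mathcomp Require Import all_boot all_order.
From mathcomp Require Import zify.
Set Implicit Arguments. Unset Strict Implicit. Unset Printing Implicit Defensive.
Import Order.TTheory.
Local Open Scope order_scope.

(* The right factor s' of the standard factorization is the smallest proper
   suffix of r: the smallest proper suffix of any word is Lyndon, so it cannot
   be longer than s', and if it were shorter it would be a proper suffix of the
   Lyndon word s', hence larger than s'.  Now a proper suffix of r u that starts
   inside r has the form v u with v a proper suffix of r, and u <= s' <= v makes
   u strictly smaller than the longer word v u; so the smallest proper suffix of
   r u cannot start inside r. *)

Section Words.
Context {d : Order.disp_t} {T : orderType d}.
Implicit Types u v w r s m : seq T.

Lemma lexltE u v : lexlt u v = (u < v :> seqlexi T).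
Proof.
elim: u v => [|a u IH] [|b v] //=.
by rewrite ltxi_cons IH; case: ltgtP.
Qed.

Lemma lexleE u v : lexle u v = (u <= v :> seqlexi T).
Proof. by rewrite /lexle lexltE le_eqVlt. Qed.

Lemma lexi_prefix u v : u <= u ++ v :> seqlexi T.
Proof. by elim: u => //= a u IH; rewrite eqhead_lexiE. Qed.

Lemma lexi_lt_cat u v w :
  u <= v :> seqlexi T -> (size u < size (v ++ w))%N -> u < v ++ w :> seqlexi T.
Proof.
move=> uv ltsz; rewrite lt_neqAle (le_trans uv (lexi_prefix v w)) andbT.
by apply: contraTneq ltsz => ->; rewrite ltnn.
Qed.

Lemma lyndon_lt_drop s j :
  lyndon s -> (0 < j < size s)%N -> drop j s > s :> seqlexi T.
Proof.
case/andP=> _ /forallP ls /andP[j0 js].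
by have /implyP := ls (Ordinal js); rewrite lexltE; apply.
Qed.

Lemma min_proper_suffix_exists w : (1 < size w)%N -> exists m, min_proper_suffix w m.
Proof.
move=> w2; pose F (i : 'I_(size w)) : seqlexi T := drop i w.
have [i /= i0 imin] := arg_minP (i0 := Ordinal w2) (P := fun i => 0 < i)%N F isT.
exists (drop i w), i; split=> //; first by rewrite i0 ltn_ord.
by move=> j /andP[j0 jw]; rewrite lexleE; apply: (imin (Ordinal jw)).
Qed.

Lemma min_proper_suffix_lyndon w m : min_proper_suffix w m -> lyndon m.
Proof.
case=> k [/andP[k0 kw] -> kmin]; apply/andP; split; first by rewrite size_drop subn_gt0.
apply/forallP => t; apply/implyP; have := ltn_ord t; move: (nat_of_ord t) => {}t.
rewrite size_drop => tw t0; have tk : (0 < t + k < size w)%N by lia.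
rewrite lexltE drop_drop lt_neqAle -lexleE kmin // andbT.
by apply/eqP => /(congr1 (@size T)); rewrite !size_drop; lia.
Qed.

Lemma std_right_factor_min_suffix r s : std_right_factor r s -> min_proper_suffix r s.
Proof.
case=> k [/andP[k0 kr] sk ls kfirst].
have [m min_m] := min_proper_suffix_exists (leq_ltn_trans k0 kr).
have lm := min_proper_suffix_lyndon min_m.
case: min_m => i [/andP[i0 ir] mi imin].
have ki : (k <= i)%N by apply: kfirst; rewrite ?i0 // -mi.
suff ik : i = k by subst; exists k; split; rewrite ?k0.
apply/eqP; rewrite eqn_leq ki andbT leqNgt; apply/negP => lt_ki.
have s_lt_m : s < m :> seqlexi T.
  have iks : (0 < i - k < size s)%N by rewrite sk size_drop; lia.
  have := lyndon_lt_drop ls iks.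
  by rewrite [in drop _ s]sk drop_drop subnK ?(ltnW lt_ki) // -mi.
by move: (imin k); rewrite -sk lexleE (lt_geF s_lt_m) k0 kr => /(_ isT).
Qed.

Lemma min_proper_suffix_cat r s u m :
  min_proper_suffix r s -> (0 < size u)%N -> lexle u s ->
  min_proper_suffix (r ++ u) m -> (size m <= size u)%N.
Proof.
case=> k [_ -> smin] u0; rewrite lexleE => us [j [/andP[j0 _] -> jmin]].
rewrite leqNgt; apply/negP => long.
have jr : (j < size r)%N by move: long; rewrite size_drop size_cat; lia.
have r0 : (0 < size r)%N := ltn_trans j0 jr.
have m_le_u : drop j (r ++ u) <= u :> seqlexi T.
  have := jmin (size r); rewrite (drop_size_cat _ (erefl (size r))) lexleE.
  by apply; rewrite r0 size_cat; lia.
move: m_le_u; rewrite lt_geF // drop_cat jr.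
apply: lexi_lt_cat; last by rewrite size_cat size_drop; lia.
by rewrite (le_trans us) // -lexleE smin ?j0.
Qed.

End Words.

Theorem lemma4p20 (d : Order.disp_t) (T : orderType d) (r r' s' u : seq T) :
  lyndon r -> (2 <= size r)%N ->
  r = r' ++ s' -> std_right_factor r s' ->
  (0 < size u)%N -> lexle u s' -> lyndon (r ++ u) ->
  forall m : seq T, min_proper_suffix (r ++ u) m -> (size m <= size u)%N.
Proof.
move=> _ _ _ /std_right_factor_min_suffix min_s u0 us _ m.
exact: min_proper_suffix_cat min_s u0 us.
Qed.
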